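(* Let $d\ge 2$ be an integer, and let $(B_\ell)$, $(C_\ell)$, $(D_\ell)$, indexed by even integers $\ell\ge 6$, satisfy for every even $\ell\ge 8$ \begin{align*} B_\ell &= (d-1)D_{\ell-2}+d\,C_{\ell-2},\\ C_\ell &= (d-1)D_{\ell-2}+d\,B_{\ell-2},\\ D_\ell &= (d^2-3d+3)D_{\ell-2}+(d-1)^2C_{\ell-2}+(d-1)^2B_{\ell-2}, \end{align*} with initial values $B_6=(d+1)d(d-1)^3$, $C_6=(d+1)d(d^3-2d^2+3d-1)$, $D_6=(d+1)d(d-1)^2(d^2-2d+3)$. Then for every even $\ell\ge 6$, \begin{align*} B_\ell &= d(d^2-d+1)^{\ell/2-1}+\tfrac12(-1)^{\ell/2-1}d(d-1)(d-2)^{\ell/2-1}+\tfrac12(-1)^{\ell/2}(d+1)d^{\ell/2},\\ C_\ell &= \tfrac12(-1)^{\ell/2-1}(d-1)d(d-2)^{\ell/2-1}+d(d^2-d+1)^{\ell/2-1}-\tfrac12(-1)^{\ell/2}d^{\ell/2}(d+1),\\ D_\ell &= (d-1)d\left((d^2-d+1)^{\ell/2-1}-(-1)^{\ell/2-1}(d-2)^{\ell/2-1}\right). \end{align*} *)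

From mathcomp Require Import all_boot all_order all_algebra.
Set Implicit Arguments. Unset Strict Implicit. Unset Printing Implicit Defensive.

(* The step (B, C, D) |-> ((d-1)D + dC, (d-1)D + dB, (d^2-3d+3)D + (d-1)^2 C + (d-1)^2 B)
   is linear, with eigenvectors (1, 1, d-1), (1, 1, -2) and (1, -1, 0) for the eigenvalues
   d^2-d+1, 2-d and -d.  Expanding the initial vector at l = 6 in this eigenbasis gives the
   closed forms (there (-1)^n (d-2)^n and (-1)^n d^n are the powers of 2-d and -d), which
   therefore solve the recurrence and match the initial values for every d; an induction
   on l/2 concludes. *)
From mathcomp Require Import all_boot all_order all_algebra.
From mathcomp Require Import ring zify.
Import GRing.Theory Num.Theory.
Local Open Scope ring_scope.

Section ClosedForms.

Variables (R : numFieldType) (x : R).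

(* [n] is [l/2 - 1]. *)
Definition closedB (n : nat) : R :=
  x * (x ^+ 2 - x + 1) ^+ n
  + 2^-1 * (-1) ^+ n * x * (x - 1) * (x - 2) ^+ n
  + 2^-1 * (-1) ^+ n.+1 * (x + 1) * x ^+ n.+1.

Definition closedC (n : nat) : R :=
  2^-1 * (-1) ^+ n * (x - 1) * x * (x - 2) ^+ n
  + x * (x ^+ 2 - x + 1) ^+ n
  - 2^-1 * (-1) ^+ n.+1 * x ^+ n.+1 * (x + 1).

Definition closedD (n : nat) : R :=
  (x - 1) * x * ((x ^+ 2 - x + 1) ^+ n - (-1) ^+ n * (x - 2) ^+ n).

Lemma closedB_rec (n : nat) :
  closedB n.+1 = (x - 1) * closedD n + x * closedC n.
Proof. by rewrite /closedB /closedC /closedD !exprS; field. Qed.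

Lemma closedC_rec (n : nat) :
  closedC n.+1 = (x - 1) * closedD n + x * closedB n.
Proof. by rewrite /closedB /closedC /closedD !exprS; field. Qed.

Lemma closedD_rec (n : nat) :
  closedD n.+1 = (x ^+ 2 - 3 * x + 3) * closedD n
                 + (x - 1) ^+ 2 * closedC n + (x - 1) ^+ 2 * closedB n.
Proof. by rewrite /closedB /closedC /closedD !exprS; field. Qed.

Lemma closedB2 : closedB 2 = (x + 1) * x * (x - 1) ^+ 3.
Proof. by rewrite /closedB; field. Qed.

Lemma closedC2 :
  closedC 2 = (x + 1) * x * (x ^+ 3 - 2 * x ^+ 2 + 3 * x - 1).
Proof. by rewrite /closedC; field. Qed.

Lemma closedD2 :
  closedD 2 = (x + 1) * x * (x - 1) ^+ 2 * (x ^+ 2 - 2 * x + 3).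
Proof. by rewrite /closedD; ring. Qed.

Lemma eq_closed_forms (n0 : nat) (b c e : nat -> R) :
  (forall n, (n0 <= n)%N -> b n.+1 = (x - 1) * e n + x * c n) ->
  (forall n, (n0 <= n)%N -> c n.+1 = (x - 1) * e n + x * b n) ->
  (forall n, (n0 <= n)%N -> e n.+1 = (x ^+ 2 - 3 * x + 3) * e n
                                    + (x - 1) ^+ 2 * c n + (x - 1) ^+ 2 * b n) ->
  b n0 = closedB n0 -> c n0 = closedC n0 -> e n0 = closedD n0 ->
  forall n, (n0 <= n)%N -> [/\ b n = closedB n, c n = closedC n & e n = closedD n].
Proof.
move=> hb hc he hb0 hc0 he0; elim=> [|n IH]; rewrite leq_eqVlt.
  by case/orP=> [/eqP <-|] //.
case/orP=> [/eqP <- //| ]; rewrite ltnS => n0n; have [IB IC IE] := IH n0n.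
by rewrite closedB_rec closedC_rec closedD_rec hb ?hc ?he // IB IC IE.
Qed.

End ClosedForms.

Theorem lemma10 (d : nat) (hd : (2 <= d)%N) (B C D : nat -> rat)
  (hB : forall l : nat, (8 <= l)%N -> ~~ odd l ->
     B l = (d%:R - 1) * D (l - 2)%N + d%:R * C (l - 2)%N)
  (hC : forall l : nat, (8 <= l)%N -> ~~ odd l ->
     C l = (d%:R - 1) * D (l - 2)%N + d%:R * B (l - 2)%N)
  (hD : forall l : nat, (8 <= l)%N -> ~~ odd l ->
     D l = (d%:R ^+ 2 - 3 * d%:R + 3) * D (l - 2)%N
           + (d%:R - 1) ^+ 2 * C (l - 2)%N + (d%:R - 1) ^+ 2 * B (l - 2)%N)
  (hB6 : B 6%N = (d%:R + 1) * d%:R * (d%:R - 1) ^+ 3)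
  (hC6 : C 6%N = (d%:R + 1) * d%:R * (d%:R ^+ 3 - 2 * d%:R ^+ 2 + 3 * d%:R - 1))
  (hD6 : D 6%N = (d%:R + 1) * d%:R * (d%:R - 1) ^+ 2 * (d%:R ^+ 2 - 2 * d%:R + 3)) :
  forall l : nat, (6 <= l)%N -> ~~ odd l ->
    let dd : rat := d%:R in
    let k : nat := (l %/ 2)%N in
    [/\ B l = dd * (dd ^+ 2 - dd + 1) ^+ k.-1
              + 2^-1 * (-1) ^+ k.-1 * dd * (dd - 1) * (dd - 2) ^+ k.-1
              + 2^-1 * (-1) ^+ k * (dd + 1) * dd ^+ k,
        C l = 2^-1 * (-1) ^+ k.-1 * (dd - 1) * dd * (dd - 2) ^+ k.-1
              + dd * (dd ^+ 2 - dd + 1) ^+ k.-1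
              - 2^-1 * (-1) ^+ k * dd ^+ k * (dd + 1)
      & D l = (dd - 1) * dd * ((dd ^+ 2 - dd + 1) ^+ k.-1
                               - (-1) ^+ k.-1 * (dd - 2) ^+ k.-1)].
Proof.
move=> l hl l_even.
have [n -> n_ge2] : exists2 n, l = (2 * n.+1)%N & (2 <= n)%N.
  exists (l %/ 2).-1; last lia.
  by have := divn_eq l 2; rewrite modn2 (negbTE l_even); lia.
have rec_index (m : nat) : (2 <= m)%N -> (8 <= 2 * m.+2)%N /\ ~~ odd (2 * m.+2).
  by move=> ?; rewrite oddM; split; lia.
have sub2 (m : nat) : (2 * m.+2 - 2 = 2 * m.+1)%N by lia.
have [] := @eq_closed_forms _ d%:R 2 (fun m => B (2 * m.+1)%N)
  (fun m => C (2 * m.+1)%N) (fun m => D (2 * m.+1)%N) _ _ _ _ _ _ n n_ge2.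
- by move=> m /rec_index[??]; rewrite /= hB // sub2.
- by move=> m /rec_index[??]; rewrite /= hC // sub2.
- by move=> m /rec_index[??]; rewrite /= hD // sub2.
- by rewrite closedB2.
- by rewrite closedC2.
- by rewrite closedD2.
by rewrite /= mulKn // /= => -> -> ->.
Qed.
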